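(* Let $S$ be a numerical semigroup with set of nonzero Apéry elements $X$, depth $q$, $\rho=qm-c$, and $D=S^*+S^*$. Let $$X_0=\{z\in X\cap D \mid \exists\, x,y\in X,\ z=x+y,\ \delta(x)+\delta(y)=\delta(z)+q-1\}.$$ Then $|X_0|\le\rho$.
   Context: A numerical semigroup is a subset $S\subseteq\mathbb N$ containing $0$, closed under addition, with finite complement; $S^*=S\setminus\{0\}$, $m=\min S^*$, $c=\max(\mathbb Z\setminus S)+1$, $q=\lceil c/m\rceil$, $\rho=qm-c\in[0,m)$. $X=\{s\in S^*: s-m\notin S\}$. For $x\in S$, $\delta(x)$ is the unique integer such that $x+\delta(x)m\in[c,c+m-1]$. *)

From mathcomp Require Import all_boot all_order all_algebra.
Import Order.TTheory GRing.Theory Num.Theory.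

Definition numerical_semigroup (S : pred nat) : Prop :=
  [/\ 0 \in S,
      (forall a b, a \in S -> b \in S -> a + b \in S)
    & exists N, forall n, N <= n -> n \in S].

Definition is_multiplicity (S : pred nat) (m : nat) : Prop :=
  [/\ m \in S, 0 < m & forall s, s \in S -> 0 < s -> m <= s].

(* c = max (Z \ S) + 1, i.e. the least integer c such that every integer >= c
   lies in S (c >= 0 always, since negative integers are not in S). *)
Definition is_conductor (S : pred nat) (c : nat) : Prop :=
  (forall n, c <= n -> n \in S) /\
  (forall k, (forall n, k <= n -> n \in S) -> c <= k).

(* q = ceil(c/m) (for m > 0) *)
Definition depth (m c : nat) : nat := (c + m.-1) %/ m.

Definition rho (m c : nat) : nat := depth m c * m - c.

(* X = { s in S^* : s - m \notin S } (s - m taken in Z) *)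
Definition apery_nz (S : pred nat) (m s : nat) : bool :=
  [&& s \in S, 0 < s & ~~ ((m <= s) && (s - m \in S))].

Definition in_D (S : pred nat) (z : nat) : Prop :=
  exists a b, [/\ a \in S, 0 < a, b \in S, 0 < b & z = a + b].

Definition is_delta (S : pred nat) (m c : nat) (delta : nat -> int) : Prop :=
  forall x, x \in S ->
    (c%:Z <= x%:Z + delta x * m%:Z <= c%:Z + m%:Z - 1)%R.

Definition X0 (S : pred nat) (m c : nat) (delta : nat -> int) (z : nat) : Prop :=
  [/\ apery_nz S m z, in_D S z &
      exists x y, [/\ apery_nz S m x, apery_nz S m y, z = x + y &
        (delta x + delta y = delta z + (depth m c)%:Z - 1)%R]].

(* The Apéry elements have pairwise distinct residues modulo m, and for x in S
   the number r(x) = x + delta(x) m - c is congruent to x - c modulo m and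
   lies in [0, m). If z = x + y with delta(x) + delta(y) = delta(z) + q - 1,
   then r(z) = r(x) + r(y) + c - (q - 1) m >= m - rho, so r maps X_0
   injectively into the interval [m - rho, m) of length rho. *)
From mathcomp Require Import all_boot all_order all_algebra.
From mathcomp Require Import zify.
Import Order.TTheory GRing.Theory Num.Theory.

Set Implicit Arguments.
Unset Strict Implicit.

Lemma uniq_size_le_interval (T : eqType) (s : seq T) (f : T -> nat) a n :
  uniq s -> {in s &, injective f} -> (forall x, x \in s -> a <= f x < a + n) ->
  size s <= n.
Proof.
move=> us finj fs; rewrite -(size_map f) -(size_iota a n).
apply: uniq_leq_size; first by rewrite map_inj_in_uniq.
by move=> _ /mapP [x xs ->]; rewrite mem_iota fs.
Qed.

Lemma depth_mul_ge m c : 0 < m -> c <= depth m c * m.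
Proof.
move=> m_gt0; rewrite /depth.
have := divn_eq (c + m.-1) m; have := ltn_pmod (c + m.-1) m_gt0; lia.
Qed.

Lemma rho_lt m c : 0 < m -> rho m c < m.
Proof.
move=> m_gt0; rewrite /rho /depth.
have := leq_divM (c + m.-1) m; lia.
Qed.

Section Apery.

Context {S : pred nat} {m : nat}.
Hypotheses (semigroupS : numerical_semigroup S) (mS : m \in S).

Lemma apery_mem z : apery_nz S m z -> z \in S.
Proof. by case/and3P. Qed.

Lemma mem_addnM x k : x \in S -> x + k * m \in S.
Proof.
case: semigroupS => _ addS _ xS; elim: k => [|k IHk]; first by rewrite addn0.
by rewrite mulSn addnCA addnC addS.
Qed.

Lemma apery_eqmod z1 z2 :
  apery_nz S m z1 -> apery_nz S m z2 -> z1 = z2 %[mod m] -> z1 = z2.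
Proof.
wlog le12 : z1 z2 / z1 <= z2.
  move=> W ap1 ap2 e; case: (leqP z1 z2) => [|/ltnW] le; first exact: W.
  by symmetry; apply: W.
move=> /and3P [z1S _ _] /and3P [_ _ not_z2m] /eqP.
rewrite eq_sym eqn_mod_dvd // => /dvdnP [[|k] e]; first lia.
move: not_z2m; have -> : z2 - m = z1 + k * m by rewrite mulSn in e; lia.
by rewrite mem_addnM // andbT -ltnNge; lia.
Qed.

End Apery.

Definition residue (m c : nat) (delta : nat -> int) (z : nat) : int :=
  (z%:Z + delta z * m%:Z - c%:Z)%R.

Lemma residue_eqmod m c delta z1 z2 :
  residue m c delta z1 = residue m c delta z2 -> z1 = z2 %[mod m].
Proof.
rewrite /residue => e; apply/eqP; rewrite -eqz_nat -!modz_nat.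
have -> : (z1%:Z = (delta z2 - delta z1) * m%:Z + z2%:Z)%R.
  by rewrite mulrBl; lia.
by rewrite modzMDl.
Qed.

Section Residue.

Context {S : pred nat} {m c : nat} {delta : nat -> int}.
Hypothesis deltaP : is_delta S m c delta.

Lemma residue_bounds z : z \in S -> (0 <= residue m c delta z < m%:Z)%R.
Proof. by move/deltaP; rewrite /residue; lia. Qed.

Lemma X0_residue_ge z :
  0 < m -> X0 S m c delta z -> (m%:Z - (rho m c)%:Z <= residue m c delta z)%R.
Proof.
move=> m_gt0 [/apery_mem zS _ [x [y [/apery_mem xS /apery_mem yS ez e]]]].
subst z; have := deltaP xS; have := deltaP yS; have := deltaP zS.
have qm_ge := depth_mul_ge c m_gt0.
set q := depth m c in e qm_ge *.
have eM : ((delta x + delta y) * m%:Z = (delta (x + y) + q%:Z - 1) * m%:Z)%R.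
  by rewrite e.
move: eM; rewrite /residue /rho !mulrDl mulN1r.
have -> : ((q * m - c)%:Z = q%:Z * m%:Z - c%:Z)%R by lia.
lia.
Qed.

End Residue.

Theorem proposition3p20 (S : pred nat) (m c : nat) (delta : nat -> int) :
  numerical_semigroup S -> is_multiplicity S m -> is_conductor S c ->
  is_delta S m c delta ->
  forall s : seq nat, uniq s -> (forall z, z \in s -> X0 S m c delta z) ->
  size s <= rho m c.
Proof.
move=> semigroupS [mS m_gt0 _] _ deltaP s us sX0.
have apery_s z : z \in s -> apery_nz S m z by case/sX0.
apply: (@uniq_size_le_interval _ s (fun z => `|residue m c delta z|%N)
          (m - rho m c) _ us).
- move=> z1 z2 /apery_s ap1 /apery_s ap2 e.
  apply: (apery_eqmod semigroupS mS ap1 ap2).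
  apply: (residue_eqmod (c := c) (delta := delta)).
  have := residue_bounds deltaP (apery_mem ap1).
  have := residue_bounds deltaP (apery_mem ap2).
  by move: e; lia.
- move=> z zs; have := X0_residue_ge deltaP m_gt0 (sX0 z zs).
  have := residue_bounds deltaP (apery_mem (apery_s z zs)).
  have := rho_lt c m_gt0; lia.
Qed.
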